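(* For every admissible sequence of bins $\sigma$ and all integers $s',\ell',k\ge 0$ with $2k\ge s'+2\ell'$, $$R(\sigma,0,k)\le \mathrm{OPT}(\sigma,s',\ell')+\min\{0,\ell'-s'\}\,S+(k-\ell')M.$$
   Context: Fix an integer $S>1$, $L=2S-1$, $M=4S-3$. Bins have integer sizes in $[S,M]$ and arrive in a sequence $\sigma$, admissible if it ends with at least as many bins of size $M$ as there are items under consideration. A packing assigns every item to a bin with total item size in each bin at most the bin size; its cost is the sum of the sizes of bins receiving at least one item. A packing is valid if each empty bin is smaller than every item packed in a later bin. A bin is wasteful if its empty space is at least the size of some item packed in a later bin; a packing is thrifty if no bin is wasteful. A partial packing of a finite sequence of bins is reasonable if every bin $b$ of that sequence contains: one item of size $S$ if $\mathrm{size}(b)\in[S,L-1]$; one item of size $L$ if $\mathrm{size}(b)=L$; two items of size $S$ or one item of size $L$ if $\mathrm{size}(b)\in[L+1,L+S-1]$; one item of size $S$ and one of size $L$ if $\mathrm{size}(b)=L+S$; three items of size $S$ or one item of size $S$ and one of size $L$ if $\mathrm{size}(b)\in[L+S+1,2L-1]$. The key bin of a packing is the first bin after which no item of size $L$ remains unpacked or at most two items of size $S$ remain unpacked; the front is the restriction of the packing to the prefix ending with the key bin. A packing is reasonable if it is thrifty and its front is reasonable. $\mathrm{OPT}(\sigma,s,\ell)$ is the minimum cost of a valid packing of $s$ items of size $S$ and $\ell$ items of size $L$ into $\sigma$; $R(\sigma,s,\ell)$ is the maximum cost of a reasonable packing of these items into $\sigma$. *)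

From mathcomp Require Import all_boot all_order all_algebra.
Set Implicit Arguments. Unset Strict Implicit. Unset Printing Implicit Defensive.

Definition Lsz (S : nat) : nat := 2 * S - 1.
Definition Msz (S : nat) : nat := 4 * S - 3.

(* A sequence of bins is a list of bin sizes; bins are indexed 0 .. size sigma - 1. *)
Definition bin (sigma : seq nat) (i : nat) : nat := nth 0 sigma i.

Definition bins_ok (S : nat) (sigma : seq nat) : Prop :=
  forall i, i < size sigma -> S <= bin sigma i <= Msz S.

Definition admissible (S : nat) (sigma : seq nat) (n : nat) : Prop :=
  n <= size sigma /\
  forall i, size sigma - n <= i < size sigma -> bin sigma i = Msz S.

(* A packing of items of sizes S and L is described (items of equal size being
   indistinguishable) by, for every bin i, the pair (number of items of size S,
   number of items of size L) packed into bin i. *)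
Definition packing := seq (nat * nat).
Definition nS (P : packing) (i : nat) : nat := (nth (0, 0) P i).1.
Definition nL (P : packing) (i : nat) : nat := (nth (0, 0) P i).2.
Definition load (S : nat) (P : packing) (i : nat) : nat :=
  nS P i * S + nL P i * Lsz S.

Definition is_packing (S : nat) (sigma : seq nat) (s l : nat) (P : packing) : Prop :=
  size P = size sigma /\
  \sum_(0 <= i < size sigma) nS P i = s /\
  \sum_(0 <= i < size sigma) nL P i = l /\
  forall i, i < size sigma -> load S P i <= bin sigma i.

Definition used (P : packing) (i : nat) : bool := 0 < nS P i + nL P i.

Definition cost (sigma : seq nat) (P : packing) : nat :=
  \sum_(0 <= i < size sigma | used P i) bin sigma i.

Definition valid (S : nat) (sigma : seq nat) (P : packing) : Prop :=
  forall i j, i < j -> j < size sigma -> ~~ used P i ->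
    (0 < nS P j -> bin sigma i < S) /\ (0 < nL P j -> bin sigma i < Lsz S).

Definition space (S : nat) (sigma : seq nat) (P : packing) (i : nat) : nat :=
  bin sigma i - load S P i.

Definition wasteful (S : nat) (sigma : seq nat) (P : packing) (i : nat) : Prop :=
  exists j, i < j /\ j < size sigma /\
    ((0 < nS P j /\ S <= space S sigma P i) \/
     (0 < nL P j /\ Lsz S <= space S sigma P i)).

Definition thrifty (S : nat) (sigma : seq nat) (P : packing) : Prop :=
  forall i, i < size sigma -> ~ wasteful S sigma P i.

(* after bin i, no item of size L remains unpacked, or at most two items of
   size S remain unpacked *)
Definition key_cond (sigma : seq nat) (P : packing) (i : nat) : Prop :=
  \sum_(i.+1 <= j < size sigma) nL P j = 0 \/
  \sum_(i.+1 <= j < size sigma) nS P j <= 2.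

(* bin i belongs to the front, i.e. i <= key bin (the first bin satisfying key_cond) *)
Definition in_front (sigma : seq nat) (P : packing) (i : nat) : Prop :=
  forall j, j < i -> ~ key_cond sigma P j.

Definition reasonable_bin (S sz a b : nat) : Prop :=
  (S <= sz <= Lsz S - 1 -> a = 1 /\ b = 0) /\
  (sz = Lsz S -> a = 0 /\ b = 1) /\
  (Lsz S + 1 <= sz <= Lsz S + S - 1 -> (a = 2 /\ b = 0) \/ (a = 0 /\ b = 1)) /\
  (sz = Lsz S + S -> a = 1 /\ b = 1) /\
  (Lsz S + S + 1 <= sz <= 2 * Lsz S - 1 -> (a = 3 /\ b = 0) \/ (a = 1 /\ b = 1)).

Definition reasonable_front (S : nat) (sigma : seq nat) (P : packing) : Prop :=
  forall i, i < size sigma -> in_front sigma P i ->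
    reasonable_bin S (bin sigma i) (nS P i) (nL P i).

Definition reasonable (S : nat) (sigma : seq nat) (P : packing) : Prop :=
  thrifty S sigma P /\ reasonable_front S sigma P.

Definition is_OPT (S : nat) (sigma : seq nat) (s l v : nat) : Prop :=
  (exists P, is_packing S sigma s l P /\ valid S sigma P /\ cost sigma P = v) /\
  (forall P, is_packing S sigma s l P -> valid S sigma P -> v <= cost sigma P).

Definition is_R (S : nat) (sigma : seq nat) (s l v : nat) : Prop :=
  (exists P, is_packing S sigma s l P /\ reasonable S sigma P /\ cost sigma P = v) /\
  (forall P, is_packing S sigma s l P -> reasonable S sigma P -> cost sigma P <= v).

From Pilot Require Import Defs.
From mathcomp Require Import all_boot all_order all_algebra.
From mathcomp Require Import zify.
Import Order.TTheory GRing.Theory Num.Theory.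

Set Implicit Arguments.
Unset Strict Implicit.

(* A bin holds at most one item of size L because M < 2L, so a packing P of k
   items of size L costs the total size of the bins holding them. Let Q be any
   valid packing of s' items of size S and l' of size L. If every bin of P is
   used by Q, then cost P <= cost Q and the claim reduces to s'S + l'M <= kM.
   Otherwise some bin i of P, of size >= L, is empty in Q. A bin j of size
   >= L used by Q but not by P can then come neither before i (P is thrifty)
   nor after i (Q is valid), so P uses every bin of Q of size >= L. Comparing
   bin by bin, with each item of size L weighted M and each item of size S
   weighted S, gives cost P <= cost Q + (k - l')M + lam (l' - s')S for
   lam = 0, 1. *)

Lemma leq_sum_nat_range n (F G : nat -> nat) :
  (forall i, i < n -> F i <= G i) ->
  \sum_(0 <= i < n) F i <= \sum_(0 <= i < n) G i.
Proof. by move=> leFG; rewrite !big_nat; apply: leq_sum => i /andP[_ /leFG]. Qed.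

Lemma sum_nat_range_eq0 n (F : nat -> nat) i :
  \sum_(0 <= j < n) F j = 0 -> i < n -> F i = 0.
Proof.
move/eqP; rewrite sum_nat_seq_eq0 => /allP/(_ i).
by rewrite mem_iota subn0 => F0 lt_in; apply/eqP/F0.
Qed.

Lemma nL_le1 S P i bsz : 1 < S -> load S P i <= bsz -> bsz <= Msz S -> nL P i <= 1.
Proof. by rewrite /load /Lsz /Msz => gt1S; case: (nL P i) => [|[|c]] //; nia. Qed.

Lemma items_weight_le S s l k (lam : bool) : 1 < S -> s + 2 * l <= 2 * k ->
  s * (lam * S) + l * Msz S <= k * Msz S + l * (lam * S).
Proof. by rewrite /Msz; case: lam; nia. Qed.

Lemma bin_exchange S bsz (lam : bool) p a c : 1 < S -> bsz <= Msz S -> p <= 1 ->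
  (0 < p -> Lsz S <= bsz) -> a * S + c * Lsz S <= bsz ->
  (0 < a + c -> Lsz S <= bsz -> 0 < p) ->
  p * bsz + a * (lam * S) + c * Msz S
    <= (if 0 < a + c then bsz else 0) + p * Msz S + c * (lam * S).
Proof.
rewrite /Lsz /Msz => gt1S leM le1p.
by case: lam; case: p le1p => [|[|?]] //; case: c => [|[|?]]; case: a => [|[|?]] /=; nia.
Qed.

Section ThriftyAgainstValid.

Variables (S k s l : nat) (sigma : seq nat) (P Q : packing).
Hypotheses (gt1S : 1 < S) (hbins : bins_ok S sigma).
Hypotheses (packP : is_packing S sigma 0 k P) (thriftyP : thrifty S sigma P).
Hypotheses (packQ : is_packing S sigma s l Q) (validQ : valid S sigma Q).

Local Notation n := (size sigma).
Local Notation b := (bin sigma).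

Lemma bin_le_M i : i < n -> b i <= Msz S.
Proof. by case/hbins/andP. Qed.

Lemma nS_P_eq0 i : i < n -> nS P i = 0.
Proof. by case: packP => _ [sumSP _]; apply: sum_nat_range_eq0. Qed.

Lemma load_P_le i : i < n -> load S P i <= b i.
Proof. by case: packP => _ [_ [_]]; apply. Qed.

Lemma load_Q_le i : i < n -> load S Q i <= b i.
Proof. by case: packQ => _ [_ [_]]; apply. Qed.

Lemma nL_P_le1 i : i < n -> nL P i <= 1.
Proof. by move=> lt_in; apply: nL_le1 gt1S (load_P_le lt_in) (bin_le_M lt_in). Qed.

Lemma L_le_bin_P i : i < n -> 0 < nL P i -> Lsz S <= b i.
Proof. by move=> lt_in; have := load_P_le lt_in; rewrite /load nS_P_eq0 //; nia. Qed.

Lemma cost_P : cost sigma P = \sum_(0 <= i < n) nL P i * b i.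
Proof.
rewrite /cost big_mkcond; apply: eq_big_nat => i /andP[_ lt_in].
rewrite /used nS_P_eq0 //; have := nL_P_le1 lt_in.
by case: (nL P i) => [|[|?]] //; rewrite ?mul0n ?mul1n.
Qed.

Lemma cost_Q : cost sigma Q = \sum_(0 <= i < n) (if used Q i then b i else 0).
Proof. exact: big_mkcond. Qed.

Lemma thrifty_fill i j : i < j -> j < n -> 0 < nL P j -> Lsz S <= b i ->
  0 < nL P i.
Proof.
move=> lt_ij lt_jn Pj leLb; rewrite lt0n; apply/negP => /eqP Pi0.
apply: (thriftyP (ltn_trans lt_ij lt_jn)); exists j; do 2!split=> //; right.
by rewrite /Defs.space /load Pi0 nS_P_eq0 ?(ltn_trans lt_ij) // subn0.
Qed.

Lemma valid_gap_small i j : i < j -> j < n -> ~~ used Q i -> used Q j ->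
  b i < Lsz S.
Proof.
move=> lt_ij lt_jn Qi Qj; have [smallS smallL] := validQ lt_ij lt_jn Qi.
move: Qj; rewrite /used; have [->|Sj] := posnP (nS Q j); first exact: smallL.
by move=> _; have := smallS Sj; rewrite /Lsz; lia.
Qed.

Lemma cost_P_le_cost_Q :
  (forall i, i < n -> 0 < nL P i -> used Q i) -> cost sigma P <= cost sigma Q.
Proof.
move=> coverQ; rewrite cost_P cost_Q; apply: leq_sum_nat_range => i lt_in.
have := nL_P_le1 lt_in; have := coverQ i lt_in.
by case: (nL P i) => [|[|?]] //= -> //; rewrite mul1n.
Qed.

Lemma big_Q_bins_in_P :
  (exists2 i, i < n & (0 < nL P i) && ~~ used Q i) ->
  forall j, j < n -> used Q j -> Lsz S <= b j -> 0 < nL P j.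
Proof.
move=> [i lt_in /andP[Pi Qi]] j lt_jn Qj leLb.
case: (ltngtP j i) => [lt_ji|lt_ij|eq_ji]; first exact: thrifty_fill lt_ji lt_in Pi _.
- by have := valid_gap_small lt_ij lt_jn Qi Qj; have := L_le_bin_P lt_in Pi; lia.
- by move: Qi; rewrite -eq_ji Qj.
Qed.

Lemma cost_exchange (lam : bool) : s + 2 * l <= 2 * k ->
  cost sigma P + s * (lam * S) + l * Msz S
    <= cost sigma Q + k * Msz S + l * (lam * S).
Proof.
move=> hk; case: packP packQ => _ [_ [sumLP _]] [_ [sumSQ [sumLQ _]]].
have [/hasP[i]|/hasPn coverQ] := boolP (has (fun i => (0 < nL P i) && ~~ used Q i)
                                           (index_iota 0 n)).
  rewrite mem_iota subn0 => /andP[_ lt_in] PnotQ.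
  have bigQ_P := big_Q_bins_in_P (ex_intro2 _ _ i lt_in PnotQ).
  rewrite cost_P cost_Q -sumLP -sumSQ -sumLQ !big_distrl -!big_split /=.
  apply: leq_sum_nat_range => j lt_jn; apply: bin_exchange => //.
  - exact: bin_le_M.
  - exact: nL_P_le1.
  - exact: L_le_bin_P.
  - exact: load_Q_le.
  - exact: bigQ_P.
have : cost sigma P <= cost sigma Q.
  apply: cost_P_le_cost_Q => i lt_in Pi; apply: contraT => Qi.
  by have := coverQ i; rewrite mem_iota subn0 lt_in Pi Qi => /(_ isT).
by have := items_weight_le lam gt1S hk; lia.
Qed.

End ThriftyAgainstValid.

Theorem lemma8 (S : nat) (hS : 1 < S) (sigma : seq nat) (s' l' k : nat)
  (hbins : bins_ok S sigma)
  (hadmR : admissible S sigma k)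
  (hadmO : admissible S sigma (s' + l'))
  (hk : s' + 2 * l' <= 2 * k)
  (r o : nat) (hR : is_R S sigma 0 k r) (hO : is_OPT S sigma s' l' o) :
  (r%:Z <= o%:Z + Order.min 0 (l'%:Z - s'%:Z) * S%:Z
          + (k%:Z - l'%:Z) * (Msz S)%:Z)%R.
Proof.
case: hR => [[P [packP [[thriftyP _] <-]]] _].
case: hO => [[Q [packQ [validQ <-]]] _].
have := cost_exchange hS hbins packP thriftyP packQ validQ (l' <= s') hk.
case: (leqP l' s') => [le_ls|lt_sl] /= exch.
- by rewrite (min_idPr _); lia.
- by rewrite (min_idPl _); lia.
Qed.
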